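(* Under the assumptions below, let $y_{\varrho h}\in Y_h$ be the unique Galerkin solution with $\varrho=h^{2\alpha}$. Then there is a constant $c>0$ independent of $h$ and $\overline{y}$ such that $$\|y_{\varrho h}-\overline{y}\|_{H_Y}\le c\begin{cases}\|\overline{y}\|_{H_Y}&\text{for }\overline{y}\in H_Y,\\ h^\alpha\|\overline{y}\|_D&\text{for }\overline{y}\in Y,\\ h^{2\alpha}\|D\overline{y}\|_{H_Y}&\text{for }\overline{y}\in Y,\ D\overline{y}\in H_Y.\end{cases}$$ Moreover, if $\overline{y}\in[H_Y,Y]_s$ for some $s\in[0,1]$, then $\|y_{\varrho h}-\overline{y}\|_{H_Y}\le c\,h^{\alpha s}\|\overline{y}\|_{[H_Y,Y]_s}$.
   Context: Abstract setting: Let $Y\subset H_Y\subset Y^*$ be a Gelfand triple of real Hilbert spaces, with duality pairing $\langle\cdot,\cdot\rangle_{Y^*,Y}$ extending the inner product of $H_Y$. Let $D:Y\to Y^*$ be bounded, linear, self-adjoint and elliptic, $\|y\|_D:=\langle Dy,y\rangle_{Y^*,Y}^{1/2}$ (an equivalent norm on $Y$). For $y\in Y$ we write ''$Dy\in H_Y$'' if there is $w\in H_Y$ with $\langle Dy,v\rangle_{Y^*,Y}=\langle w,v\rangle_{H_Y}$ for all $v\in Y$, and then $\|Dy\|_{H_Y}:=\|w\|_{H_Y}$. Discretization: For each discretization parameter $h\in(0,h_0]$ let $Y_h\subset Y$ be a finite-dimensional subspace, and assume there are maps $P_h:Y\to Y_h$, an exponent $\alpha>0$ and constants $c_1,c_2,c_3,c_4>0$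 independent of $h$ such that for all $y\in Y$: $\|y-P_hy\|_{H_Y}\le c_1h^\alpha\|y\|_D$ and $\|y-P_hy\|_D\le c_2\|y\|_D$; and, if in addition $Dy\in H_Y$: $\|y-P_hy\|_{H_Y}\le c_3h^{2\alpha}\|Dy\|_{H_Y}$ and $\|y-P_hy\|_D\le c_4h^\alpha\|Dy\|_{H_Y}$. Given $\overline{y}\in H_Y$ and $\varrho>0$, the Galerkin solution $y_{\varrho h}\in Y_h$ satisfies $\langle y_{\varrho h},y_h\rangle_{H_Y}+\varrho\langle Dy_{\varrho h},y_h\rangle_{Y^*,Y}=\langle\overline{y},y_h\rangle_{H_Y}$ for all $y_h\in Y_h$. $[H_Y,Y]_s$, $s\in[0,1]$, denotes the interpolation space between $H_Y$ and $Y$ (with $Y$ normed by $\|\cdot\|_D$) obtained by an exact interpolation method of exponent $s$ (e.g. the real $K$-method), with $[H_Y,Y]_0=H_Y$ and $[H_Y,Y]_1=Y$. *)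

From HB Require Import structures.
From mathcomp Require Import all_boot all_order all_algebra.
From mathcomp Require Import all_classical all_reals all_analysis.
Set Implicit Arguments.
Unset Strict Implicit.
Unset Printing Implicit Defensive.
Import Order.TTheory GRing.Theory Num.Theory.
Local Open Scope classical_set_scope.
Local Open Scope ring_scope.

Definition form_norm {R : realType} {H : lmodType R} (b : H -> H -> R) (x : H) : R :=
  Num.sqrt (b x x).

Definition is_inner_product {R : realType} {H : lmodType R} (ip : H -> H -> R) : Prop :=
  (forall x y, ip x y = ip y x) /\
  (forall k x y z, ip (k *: x + y) z = k * ip x z + ip y z) /\
  (forall x, 0 <= ip x x) /\
  (forall x, ip x x = 0 -> x = 0).

Definition complete_wrt {R : realType} {H : lmodType R} (P : set H) (nrm : H -> R) : Prop :=
  forall u : nat -> H, (forall n, P (u n)) ->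
  (forall e, 0 < e -> exists N, forall m n, (N <= m)%N -> (N <= n)%N -> nrm (u m - u n) < e) ->
  exists l, P l /\ (forall e, 0 < e -> exists N, forall n, (N <= n)%N -> nrm (u n - l) < e).

Definition is_subspace {R : realType} {H : lmodType R} (P : set H) : Prop :=
  P 0 /\ (forall k x y, P x -> P y -> P (k *: x + y)).

(* Gelfand triple Y ⊂ H_Y ⊂ Y^* with H_Y = (H, ip), and the operator D : Y -> Y^*
   represented by its bilinear form a(y,v) = <Dy, v>_{Y^*,Y}.  Y is normed by
   ||y||_D = sqrt(a y y) (an equivalent norm on Y), so boundedness of D is automatic
   and ellipticity amounts to positivity. *)
Record gelfand_setting {R : realType} {H : lmodType R}
    (ip : H -> H -> R) (Y : set H) (a : H -> H -> R) : Prop := {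
  gs_ip : is_inner_product ip;
  gs_H_complete : complete_wrt setT (form_norm ip);
  gs_Y_subspace : is_subspace Y;
  gs_a_sym : forall y v, Y y -> Y v -> a y v = a v y;
  gs_a_lin : forall k y z v, Y y -> Y z -> Y v -> a (k *: y + z) v = k * a y v + a z v;
  gs_a_pos : forall y, Y y -> y <> 0 -> 0 < a y y;
  gs_Y_complete : complete_wrt Y (form_norm a);
  gs_Y_embed : exists C, 0 < C /\ forall y, Y y -> form_norm ip y <= C * form_norm a y;
  gs_Y_dense : forall x e, 0 < e -> exists y, Y y /\ form_norm ip (x - y) < e
}.

(* "Dy ∈ H_Y with representative w". *)
Definition D_in_H {R : realType} {H : lmodType R}
    (ip : H -> H -> R) (Y : set H) (a : H -> H -> R) (y w : H) : Prop :=
  forall v, Y v -> a y v = ip w v.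

Definition fin_dim_subspace {R : realType} {H : lmodType R} (Y V : set H) : Prop :=
  exists (n : nat) (b : 'I_n -> H), (forall i, Y (b i)) /\
    (forall x, V x <-> exists c : 'I_n -> R, x = \sum_(i < n) c i *: b i).

Definition galerkin_solution {R : realType} {H : lmodType R}
    (ip a : H -> H -> R) (V : set H) (rho : R) (ybar y : H) : Prop :=
  V y /\ (forall v, V v -> ip y v + rho * a y v = ip ybar v).

Definition K_functional {R : realType} {H : lmodType R}
    (ip : H -> H -> R) (Y : set H) (a : H -> H -> R) (t : R) (y : H) : R :=
  inf [set r | exists y0 y1, Y y1 /\ y = y0 + y1 /\
                 r = form_norm ip y0 + t * form_norm a y1].

Definition K_integral {R : realType} {H : lmodType R}
    (ip : H -> H -> R) (Y : set H) (a : H -> H -> R) (s : R) (y : H) : \bar R :=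
  let f := fun t : R => ((t `^ (- s) * K_functional ip Y a t y) ^+ 2 / t)%R in
  (\int[@lebesgue_measure R]_(t in [set t : R | (0 < t)%R]) (f t)%:E)%E.

(* Membership in [H_Y, Y]_s: H_Y for s = 0, Y for s = 1, and the (normalized)
   real K-method (theta = s, q = 2) for 0 < s < 1. *)
Definition interp_mem {R : realType} {H : lmodType R}
    (ip : H -> H -> R) (Y : set H) (a : H -> H -> R) (s : R) (y : H) : Prop :=
  if s == 0 then True
  else if s == 1 then Y y
  else (K_integral ip Y a s y < +oo)%E.

(* Norm of [H_Y, Y]_s; for 0 < s < 1 the K-norm is normalized by sqrt(2 s (1-s)),
   which makes the method exact of exponent s (and [X,X]_s = X isometrically). *)
Definition interp_norm {R : realType} {H : lmodType R}
    (ip : H -> H -> R) (Y : set H) (a : H -> H -> R) (s : R) (y : H) : R :=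
  if s == 0 then form_norm ip y
  else if s == 1 then form_norm a y
  else Num.sqrt (2 * s * (1 - s)) * Num.sqrt (fine (K_integral ip Y a s y)).

From HB Require Import structures.
From mathcomp Require Import all_boot all_order all_algebra.
From mathcomp Require Import all_classical all_reals all_analysis.
From mathcomp Require Import ring lra.
From mathcomp Require Import measurable_realfun.
Import Order.TTheory GRing.Theory Num.Theory.
Local Open Scope classical_set_scope.
Local Open Scope ring_scope.

(* With t = h^alpha the Galerkin solution minimises |v - ybar|^2 + t^2 a(v, v)
   over Y_h.  Testing with v = P_h y1 for an arbitrary splitting ybar = y0 + y1,
   y1 in Y, bounds the error by a multiple of the K-functional K(t, ybar); the
   trivial splittings give the first two estimates, and K(t, y) <= 2 t^s |y|_s
   on [H_Y, Y]_s because K(., y) is nondecreasing and K(u, y)/u nonincreasing,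
   so the K-integral over a dyadic neighbourhood of t already sees K(t, y).
   For D ybar = w in H_Y one tests with v = P_h ybar instead: a(ybar, .) = (w, .)
   turns the minimality into a quadratic inequality for the error. *)

Section Subspace.
Context {R : realType} {H : lmodType R} {P : set H}.
Hypothesis P_subspace : is_subspace P.

Lemma subspace0 : P 0. Proof. by case: P_subspace. Qed.

Lemma subspaceZD k {x y} : P x -> P y -> P (k *: x + y).
Proof. by case: P_subspace => _; apply. Qed.

Lemma subspaceD {x y} : P x -> P y -> P (x + y).
Proof. by move=> Px Py; have := subspaceZD 1 Px Py; rewrite scale1r. Qed.

Lemma subspaceZ k {x} : P x -> P (k *: x).
Proof. by move=> Px; have := subspaceZD k Px subspace0; rewrite addr0. Qed.

Lemma subspaceB {x y} : P x -> P y -> P (x - y).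
Proof. by move=> Px Py; rewrite -scaleN1r addrC; apply: subspaceZD. Qed.

End Subspace.

Lemma fin_dim_subspace_sub {R : realType} {H : lmodType R} {Y V : set H} :
  is_subspace Y -> fin_dim_subspace Y V -> V `<=` Y.
Proof.
move=> Ysub [n [b [Yb spanV]]] x /spanV [c ->].
apply: (big_ind Y); first exact: subspace0.
- by move=> ?? ??; apply: subspaceD.
- by move=> i _; apply: subspaceZ.
Qed.

Lemma fin_dim_subspace_subspace {R : realType} {H : lmodType R} {Y V : set H} :
  fin_dim_subspace Y V -> is_subspace V.
Proof.
move=> [n [b [_ spanV]]]; split.
  by apply/spanV; exists (fun=> 0); rewrite big1 // => i _; rewrite scale0r.
move=> k x y /spanV [cx ->] /spanV [cy ->]; apply/spanV.
exists (fun i => k * cx i + cy i); rewrite scaler_sumr -big_split /=.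
by apply: eq_bigr => i _; rewrite scalerDl scalerA.
Qed.

Definition semi_inner_form {R : realType} {H : lmodType R} (b : H -> H -> R) (P : set H) :=
  [/\ is_subspace P, (forall y v, P y -> P v -> b y v = b v y),
      (forall k y z v, P y -> P z -> P v -> b (k *: y + z) v = k * b y v + b z v)
    & (forall y, P y -> 0 <= b y y)].

Lemma form_norm_ge0 {R : realType} {H : lmodType R} (b : H -> H -> R) x :
  0 <= form_norm b x.
Proof. exact: sqrtr_ge0. Qed.

Section SemiInnerForm.
Context {R : realType} {H : lmodType R} {b : H -> H -> R} {P : set H}.
Hypothesis b_form : semi_inner_form b P.

Let P_subspace : is_subspace P. Proof. by case: b_form. Qed.

Lemma formC {y v} : P y -> P v -> b y v = b v y.
Proof. by case: b_form => _ + _ _; apply. Qed.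

Lemma form_ge0 {y} : P y -> 0 <= b y y.
Proof. by case: b_form => _ _ _; apply. Qed.

Lemma formZDl k {y z v} : P y -> P z -> P v -> b (k *: y + z) v = k * b y v + b z v.
Proof. by case: b_form => _ _ + _; apply. Qed.

Lemma formDl {x y z} : P x -> P y -> P z -> b (x + y) z = b x z + b y z.
Proof. by move=> Px Py Pz; have := formZDl 1 Px Py Pz; rewrite scale1r mul1r. Qed.

Lemma form0l {z} : P z -> b 0 z = 0.
Proof.
move=> Pz; have P0 := subspace0 P_subspace.
by have := formDl P0 P0 Pz; rewrite addr0; lra.
Qed.

Lemma formZl k {x z} : P x -> P z -> b (k *: x) z = k * b x z.
Proof.
move=> Px Pz; have := formZDl k Px (subspace0 P_subspace) Pz.
by rewrite addr0 form0l // addr0.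
Qed.

Lemma formBl {x y z} : P x -> P y -> P z -> b (x - y) z = b x z - b y z.
Proof.
move=> Px Py Pz; rewrite -scaleN1r addrC formZDl //; lra.
Qed.

Lemma formDr {x y z} : P x -> P y -> P z -> b z (x + y) = b z x + b z y.
Proof.
by move=> Px Py Pz; rewrite formC ?formDl ?(formC Pz) //; apply: subspaceD.
Qed.

Lemma formZr k {x z} : P x -> P z -> b z (k *: x) = k * b z x.
Proof.
by move=> Px Pz; rewrite formC ?formZl ?(formC Pz) //; apply: subspaceZ.
Qed.

Lemma form_sqrD {x y} : P x -> P y -> b (x + y) (x + y) = b x x + 2 * b x y + b y y.
Proof.
move=> Px Py; rewrite formDl ?formDr //; last exact: subspaceD.
by rewrite (formC Py Px); ring.
Qed.

Lemma form_CauchySchwarz {x y} : P x -> P y -> b x y ^+ 2 <= b x x * b y y.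
Proof.
move=> Px Py.
have quad r : 0 <= b x x + 2 * r * b x y + r ^+ 2 * b y y.
  have Pry := subspaceZ P_subspace r Py.
  have := form_ge0 (subspaceD P_subspace Px Pry).
  by rewrite form_sqrD // formZl // !formZr // expr2; lra.
have [yy0|yy_neq0] := eqVneq (b y y) 0.
  rewrite yy0 mulr0; have [->|xy_neq0] := eqVneq (b x y) 0; first by rewrite expr0n.
  (* a linear function of [r] cannot stay nonnegative *)
  have := quad (- (b x x + 1) / (2 * b x y)); rewrite yy0 mulr0 addr0.
  have -> : 2 * (- (b x x + 1) / (2 * b x y)) * b x y = - (b x x + 1) by field.
  lra.
have yy_gt0 : 0 < b y y by rewrite lt_def yy_neq0 form_ge0.
have := quad (- b x y / b y y).
have -> : b x x + 2 * (- b x y / b y y) * b x y + (- b x y / b y y) ^+ 2 * b y y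
   = b x x - b x y ^+ 2 / b y y by field.
by rewrite subr_ge0 ler_pdivrMr // mulrC.
Qed.

Lemma form_norm_sqr {x} : P x -> form_norm b x ^+ 2 = b x x.
Proof. by move=> Px; rewrite sqr_sqrtr // form_ge0. Qed.

Lemma form_norm0 : form_norm b 0 = 0.
Proof. by rewrite /form_norm form0l ?sqrtr0 //; apply: subspace0. Qed.

Lemma form_CauchySchwarz_norm {x y} : P x -> P y ->
  `|b x y| <= form_norm b x * form_norm b y.
Proof.
move=> Px Py; rewrite -(@ler_pXn2r _ 2%N) // ?nnegrE ?mulr_ge0 ?form_norm_ge0 //.
by rewrite real_normK ?num_real // exprMn !form_norm_sqr // form_CauchySchwarz.
Qed.

Lemma form_normD {x y} : P x -> P y ->
  form_norm b (x + y) <= form_norm b x + form_norm b y.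
Proof.
move=> Px Py; rewrite -(@ler_pXn2r _ 2%N) // ?nnegrE ?addr_ge0 ?form_norm_ge0 //.
rewrite (form_norm_sqr (subspaceD P_subspace Px Py)) form_sqrD // sqrrD !form_norm_sqr //.
have := le_trans (ler_norm (b x y)) (form_CauchySchwarz_norm Px Py); lra.
Qed.

Lemma form_normN {x} : P x -> form_norm b (- x) = form_norm b x.
Proof.
move=> Px; rewrite /form_norm -scaleN1r formZl ?formZr ?mulN1r ?opprK //.
exact: subspaceZ.
Qed.

Lemma form_normB {x y} : P x -> P y ->
  form_norm b (x - y) <= form_norm b x + form_norm b y.
Proof.
move=> Px Py; rewrite -(form_normN Py).
by apply: form_normD => //; rewrite -scaleN1r; apply: subspaceZ.
Qed.

Lemma form_normBC {x y} : P x -> P y -> form_norm b (x - y) = form_norm b (y - x).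
Proof. by move=> Px Py; rewrite -opprB form_normN //; apply: subspaceB. Qed.

End SemiInnerForm.

Section PowerIntegrals.
Context {R : realType}.
Notation mu := (@lebesgue_measure R).

Lemma measurable_gt0 : measurable [set x : R | 0 < x].
Proof.
have -> : [set x : R | 0 < x] = `]0, +oo[%classic.
  by apply/seteqP; split => x /=; rewrite in_itv /= andbT.
exact: measurable_itv.
Qed.

Lemma integral_itv_powR {q a b : R} : q != 0 -> 0 < a -> a < b ->
  (\int[mu]_(x in `[a, b]) (x `^ (q - 1))%:E = ((b `^ q - a `^ q) / q)%:E)%E.
Proof.
move=> q0 a0 ab.
pose F x := q^-1 * x `^ q.
have dF (x : R) : 0 < x -> is_derive x 1 F (x `^ (q - 1)).
  move=> x0; have := @is_deriveZ R R R (fun y => y `^ q) (q^-1) x 1 _ (is_derive1_powR q x0).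
  by rewrite /GRing.scale /= mulrA mulVf // mul1r.
have F_cont (x : R) : 0 < x -> {for x, continuous (F : R^o -> R^o)}.
  move=> x0; apply: (@differentiable_continuous R R^o R^o).
  by apply/derivable1_diffP; case: (dF x x0).
rewrite (@continuous_FTC2 _ _ F) //.
- by rewrite -EFinB -mulrBr mulrC.
- apply: derivable_within_continuous => x; rewrite in_itv /= => /andP[ax _].
  by apply: derivable_powR; rewrite in_itv /= andbT (lt_le_trans a0).
- split.
  + move=> x; rewrite in_itv /= => /andP[ax _].
    by case: (dF x (lt_trans a0 ax)).
  + exact/cvg_at_right_filter/F_cont.
  + exact/cvg_at_left_filter/F_cont/(lt_trans a0 ab).
- move=> x; rewrite in_itv /= => /andP[ax _].
  by rewrite derive1E; case: (dF x (lt_trans a0 ax)).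
Qed.

Lemma integral_pos_ge_powR {f : R -> R} {k p a b : R} :
  measurable_fun [set x : R | 0 < x] f -> (forall x, 0 < x -> 0 <= f x) ->
  0 <= k -> p != 0 -> 0 < a -> a < b ->
  (forall x, a <= x <= b -> k * x `^ (p - 1) <= f x) ->
  ((k * ((b `^ p - a `^ p) / p))%:E <=
     \int[mu]_(x in [set x : R | (0 < x)%R]) (f x)%:E)%E.
Proof.
move=> mf f0 k0 p0 a0 ab kf.
have ab_pos : `[a, b]%classic `<=` [set x : R | 0 < x].
  by move=> x /=; rewrite in_itv /= => /andP[ax _]; exact: (lt_le_trans a0 ax).
apply: (@le_trans _ _ (\int[mu]_(x in `[a, b]) (f x)%:E)%E); last first.
  apply: ge0_subset_integral => //; first exact: measurable_gt0.
  exact/measurable_EFinP.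
rewrite EFinM -(integral_itv_powR p0 a0 ab) -ge0_integralZl_EFin //; last 2 first.
- by move=> x /=; rewrite in_itv /= => /andP[ax _]; rewrite lee_fin powR_ge0.
- by apply/measurable_EFinP; exact: measurable_funTS (measurable_powR _).
apply: ge0_le_integral => //.
- by move=> x _; rewrite lee_fin mulr_ge0 // powR_ge0.
- apply/measurable_EFinP/measurable_funM; first exact: measurable_cst.
  exact: measurable_funTS (measurable_powR _).
- exact: (@measurable_EFinP _ _ _ _ f).2 (measurable_funS measurable_gt0 ab_pos mf).
Qed.

End PowerIntegrals.

Definition interp_integral {R : realType} (K : R -> R) (s : R) : \bar R :=
  (\int[@lebesgue_measure R]_(t in [set t : R | (0 < t)%R])
     ((t `^ (- s) * K t) ^+ 2 / t)%:E)%E.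

Section KMethodBound.
Context {R : realType} (K : R -> R) (s t : R).
Hypothesis K_ge0 : forall u, 0 < u -> 0 <= K u.
Hypothesis K_nondecreasing : forall u v, 0 < u -> u <= v -> K u <= K v.
Hypothesis t_gt0 : 0 < t.
Hypothesis interp_integral_fin : (interp_integral K s < +oo)%E.

Let f x := (x `^ (- s) * K x) ^+ 2 / x.
Let J := fine (interp_integral K s).
Let T := t `^ s.

Let f_ge0 x : 0 < x -> 0 <= f x.
Proof. by move=> x0; rewrite divr_ge0 // ?sqr_ge0 // ltW. Qed.

Let measurable_f : measurable_fun [set x : R | 0 < x] f.
Proof.
have mK : measurable_fun [set x : R | 0 < x] K.
  pose g x := if 0 < x then K x else 0.
  have g_nd : {homo g : u v / u <= v}.
    move=> u v uv; rewrite /g; case: ifP => u0; case: ifP => v0 //.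
    - exact: K_nondecreasing.
    - by move: (lt_le_trans u0 uv); rewrite v0.
    - exact: K_ge0.
  apply: eq_measurable_fun (nondecreasing_measurable measurable_gt0 g_nd).
  by move=> x; rewrite inE /g /= => ->.
apply: (eq_measurable_fun (fun x => (x `^ (- s) * K x) ^+ 2 * x `^ (-1))).
  by move=> x; rewrite inE /= => x0; rewrite powR_inv1 // ltW.
apply: measurable_funM; last exact: measurable_funTS (measurable_powR _).
apply: measurable_funX; apply: measurable_funM => //.
exact: measurable_funTS (measurable_powR _).
Qed.

Let interp_integralE : interp_integral K s = J%:E.
Proof.
rewrite fineK // ge0_fin_numE //.
by apply: integral_ge0 => x x0; rewrite lee_fin f_ge0.
Qed.

Let T_gt0 : 0 < T. Proof. by rewrite powR_gt0. Qed.

Let tNs : t `^ (- s) = T^-1. Proof. by rewrite powRN. Qed.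

Let powRDp (x u v : R) : 0 < x -> x `^ (u + v) = x `^ u * x `^ v.
Proof. by move=> x0; rewrite powRD // (gt_eqF x0) implybT. Qed.

(* Integrate over [t, lam t] with lam ^ (-2s) = 1/2. *)
Lemma Ksqr_le_interp_integral_above : 0 < s -> K t ^+ 2 <= 4 * s * T ^+ 2 * J.
Proof.
move=> s_gt0; pose p := - (2 * s).
have p_neq0 : p != 0 by rewrite /p oppr_eq0 mulf_neq0 // gt_eqF.
pose lam := 2 `^ (2 * s)^-1.
have lam_gt0 : 0 < lam by rewrite powR_gt0.
have lamp : lam `^ p = 2^-1.
  by rewrite /lam -powRrM /p mulrN mulVf ?powR_inv1 // gt_eqF // mulr_gt0.
have lam_gt1 : 1 < lam.
  rewrite ltNge; apply/negP => lam_le1.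
  have : lam `^ (2 * s) <= 1 `^ (2 * s).
    by apply: ge0_ler_powR => //; rewrite ?nnegrE ?ltW ?mulr_gt0.
  rewrite powR1 /lam -powRrM mulVf ?powRr1 //; first lra.
  by rewrite gt_eqF // mulr_gt0.
have t_lt : t < lam * t by rewrite ltr_pMl.
have := integral_pos_ge_powR measurable_f f_ge0 (sqr_ge0 (K t)) p_neq0 t_gt0 t_lt.
have /[swap]/[apply] : forall x, t <= x <= lam * t -> K t ^+ 2 * x `^ (p - 1) <= f x.
  move=> x /andP[tx _]; have x0 : 0 < x := lt_le_trans t_gt0 tx.
  rewrite (_ : p - 1 = -s + -s + -1); last by rewrite /p; ring.
  rewrite !powRDp // (powR_inv1 (ltW x0)) /f.
  rewrite (_ : (x `^ (- s) * K x) ^+ 2 / x = K x ^+ 2 * (x `^ (- s) * x `^ (- s) * x^-1));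
    last by ring.
  apply: ler_wpM2r; first by rewrite !mulr_ge0 ?powR_ge0 // invr_ge0 ltW.
  by rewrite ler_pXn2r ?nnegrE ?K_ge0 ?K_nondecreasing.
rewrite -/(interp_integral K s) interp_integralE lee_fin.
rewrite (powRM _ (ltW lam_gt0) (ltW t_gt0)) lamp (_ : p = -s + -s); last by rewrite /p; ring.
rewrite powRDp // tNs.
have -> : K t ^+ 2 * ((2^-1 * (T^-1 * T^-1) - T^-1 * T^-1) / (-s + -s))
    = K t ^+ 2 / (4 * s * T ^+ 2) by field; rewrite gt_eqF //; lra.
by rewrite ler_pdivrMr ?mulr_gt0 ?exprn_gt0 // mulrC.
Qed.

Hypothesis K_ratio : forall u v, 0 < u -> u <= v -> u * K v <= v * K u.

(* Integrate over [eps t, t] with eps ^ (2 - 2s) = 1/2. *)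
Lemma Ksqr_le_interp_integral_below : s < 1 -> K t ^+ 2 <= 4 * (1 - s) * T ^+ 2 * J.
Proof.
move=> s_lt1; pose p := 2 - 2 * s.
have p_gt0 : 0 < p by rewrite /p; lra.
pose eps := 2 `^ (- p^-1).
have eps_gt0 : 0 < eps by rewrite powR_gt0.
have epsp : eps `^ p = 2^-1 by rewrite /eps -powRrM mulNr mulVf ?powR_inv1 // gt_eqF.
have eps_lt1 : eps < 1.
  rewrite ltNge; apply/negP => eps_ge1.
  have : 1 `^ p <= eps `^ p by apply: ge0_ler_powR => //; rewrite ?nnegrE ?ltW.
  by rewrite powR1 epsp; lra.
have t_gt : eps * t < t by rewrite gtr_pMl.
have := integral_pos_ge_powR measurable_f f_ge0 (divr_ge0 (sqr_ge0 (K t)) (sqr_ge0 t))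
  (lt0r_neq0 p_gt0) (mulr_gt0 eps_gt0 t_gt0) t_gt.
have /[swap]/[apply] : forall x, eps * t <= x <= t ->
    K t ^+ 2 / t ^+ 2 * x `^ (p - 1) <= f x.
  move=> x /andP[tx xt]; have x0 : 0 < x := lt_le_trans (mulr_gt0 eps_gt0 t_gt0) tx.
  rewrite (_ : p - 1 = -s + -s + 1); last by rewrite /p; ring.
  rewrite !powRDp // (powRr1 (ltW x0)) /f.
  have -> : K t ^+ 2 / t ^+ 2 * (x `^ (- s) * x `^ (- s) * x)
     = (x * K t) ^+ 2 * (x `^ (- s) * x `^ (- s) / (t ^+ 2 * x)).
    by field; rewrite !gt_eqF.
  have -> : (x `^ (- s) * K x) ^+ 2 / x
     = (t * K x) ^+ 2 * (x `^ (- s) * x `^ (- s) / (t ^+ 2 * x)).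
    by field; rewrite !gt_eqF.
  apply: ler_wpM2r; first by rewrite divr_ge0 ?mulr_ge0 ?powR_ge0 // ltW.
  rewrite ler_pXn2r ?K_ratio // nnegrE mulr_ge0 ?K_ge0 // ltW //.
rewrite -/(interp_integral K s) interp_integralE lee_fin.
rewrite (powRM _ (ltW eps_gt0) (ltW t_gt0)) epsp.
rewrite (_ : p = 1 + 1 + (-s + -s)); last by rewrite /p; ring.
rewrite !powRDp // tNs (powRr1 (ltW t_gt0)).
have -> : K t ^+ 2 / t ^+ 2 * ((t * t * (T^-1 * T^-1) - 2^-1 * (t * t * (T^-1 * T^-1))) /
    (1 + 1 + (-s + -s))) = K t ^+ 2 / (4 * (1 - s) * T ^+ 2).
  by field; rewrite !gt_eqF //; lra.
by rewrite ler_pdivrMr ?mulr_gt0 ?exprn_gt0 ?subr_gt0 // mulrC.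
Qed.

Lemma K_le_interp_integral : 0 < s -> s < 1 ->
  K t <= 2 * T * Num.sqrt (2 * s * (1 - s)) * Num.sqrt J.
Proof.
move=> s_gt0 s_lt1.
have J_ge0 : 0 <= J by rewrite -lee_fin -interp_integralE; apply: integral_ge0 => x x0;
  rewrite lee_fin f_ge0.
have s_ge0 := ltW s_gt0.
rewrite -(@ler_pXn2r _ 2%N) ?nnegrE ?K_ge0 ?mulr_ge0 ?sqrtr_ge0 ?(ltW T_gt0) //.
rewrite !exprMn !sqr_sqrtr ?mulr_ge0 // ?subr_ge0 ?(ltW s_lt1) //.
have TJ_ge0 : 0 <= T ^+ 2 * J by rewrite mulr_ge0 ?sqr_ge0.
(* min (4 s, 4 (1 - s)) <= 8 s (1 - s) *)
have [s_small|s_large] := leP s (2^-1).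
- apply: (le_trans (Ksqr_le_interp_integral_above s_gt0)).
  have : 0 <= s * (1 - 2 * s) * (T ^+ 2 * J) by apply: mulr_ge0 => //; apply: mulr_ge0; lra.
  clearbody T J; lra.
- apply: (le_trans (Ksqr_le_interp_integral_below s_lt1)).
  have : 0 <= (2 * s - 1) * (1 - s) * (T ^+ 2 * J).
    by apply: mulr_ge0 => //; apply: mulr_ge0; lra.
  clearbody T J; lra.
Qed.

End KMethodBound.

Section KFunctional.
Context {R : realType} {H : lmodType R} {ip a : H -> H -> R} {Y : set H}.
Hypothesis Y0 : Y 0.
Variable y : H.

Lemma K_functional_le {t y0 y1} : 0 <= t -> Y y1 -> y = y0 + y1 ->
  K_functional ip Y a t y <= form_norm ip y0 + t * form_norm a y1.
Proof.
move=> t_ge0 Yy1 y_split; apply: ge_inf; last by exists y0, y1.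
exists 0 => _ [z0 [z1 [_ [_ ->]]]].
by rewrite addr_ge0 ?form_norm_ge0 // mulr_ge0 ?form_norm_ge0.
Qed.

Lemma le_K_functional t r :
  (forall y0 y1, Y y1 -> y = y0 + y1 -> r <= form_norm ip y0 + t * form_norm a y1) ->
  r <= K_functional ip Y a t y.
Proof.
move=> r_le; apply: lb_le_inf; last by move=> _ [y0 [y1 [Yy1 [y_split ->]]]]; exact: r_le.
exists (form_norm ip y + t * form_norm a 0), y, 0.
by rewrite addr0.
Qed.

Lemma K_functional_ge0 t : 0 <= t -> 0 <= K_functional ip Y a t y.
Proof.
move=> t_ge0; apply: le_K_functional => y0 y1 _ _.
by rewrite addr_ge0 ?form_norm_ge0 // mulr_ge0 ?form_norm_ge0.
Qed.

Lemma K_functional_nondecreasing u v : 0 <= u -> u <= v ->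
  K_functional ip Y a u y <= K_functional ip Y a v y.
Proof.
move=> u_ge0 uv; apply: le_K_functional => y0 y1 Yy1 y_split.
apply: (le_trans (K_functional_le u_ge0 Yy1 y_split)).
by rewrite lerD2l ler_wpM2r ?form_norm_ge0.
Qed.

Lemma K_functional_ratio u v : 0 < u -> u <= v ->
  u * K_functional ip Y a v y <= v * K_functional ip Y a u y.
Proof.
move=> u_gt0 uv; have v_gt0 : 0 < v := lt_le_trans u_gt0 uv.
have uv_ge0 : 0 <= u / v by rewrite divr_ge0 // ltW.
suff scaled : u / v * K_functional ip Y a v y <= K_functional ip Y a u y.
  by have := ler_wpM2l (ltW v_gt0) scaled; rewrite mulrCA mulrA divfK ?gt_eqF.
apply: le_K_functional => y0 y1 Yy1 y_split.
apply: (le_trans (ler_wpM2l uv_ge0 (K_functional_le (ltW v_gt0) Yy1 y_split))).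
rewrite mulrDr mulrA divfK ?gt_eqF // lerD2r.
rewrite -[X in _ <= X]mul1r ler_wpM2r ?form_norm_ge0 //.
by rewrite ler_pdivrMr // mul1r.
Qed.

Lemma K_functional_le_interp_norm t s :
  semi_inner_form ip setT -> semi_inner_form a Y -> 0 < t -> 0 <= s <= 1 ->
  interp_mem ip Y a s y ->
  K_functional ip Y a t y <= 2 * t `^ s * interp_norm ip Y a s y.
Proof.
move=> ip_form a_form t_gt0 /andP[s_ge0 s_le1]; rewrite /interp_mem /interp_norm.
have [->|s_neq0] := eqVneq s 0 => [_|].
  rewrite powRr0 mulr1.
  have := K_functional_le (ltW t_gt0) Y0 (esym (addr0 y)).
  rewrite (form_norm0 a_form) mulr0 addr0; have := form_norm_ge0 ip y; lra.
have [->|s_neq1] := eqVneq s 1 => [Yy|].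
  rewrite powRr1 ?(ltW t_gt0) //.
  have := K_functional_le (ltW t_gt0) Yy (esym (add0r y)).
  rewrite (form_norm0 ip_form) add0r.
  have := mulr_ge0 (ltW t_gt0) (form_norm_ge0 a y); lra.
move=> fin; rewrite mulrA.
(* [K_integral ip Y a s y] unfolds to [interp_integral (K_functional ip Y a ^~ y) s]. *)
apply: (@K_le_interp_integral R (K_functional ip Y a ^~ y)) => //.
- by move=> u /ltW; apply: K_functional_ge0.
- by move=> u v /ltW; apply: K_functional_nondecreasing.
- exact: K_functional_ratio.
- by rewrite lt_def s_neq0.
- by rewrite lt_def eq_sym s_neq1.
Qed.

End KFunctional.

Lemma interp_norm_ge0 {R : realType} {H : lmodType R} (ip a : H -> H -> R) (Y : set H) s y :
  0 <= interp_norm ip Y a s y.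
Proof.
by rewrite /interp_norm; case: ifP => _; [|case: ifP => _];
  rewrite ?form_norm_ge0 ?mulr_ge0 ?sqrtr_ge0.
Qed.

Lemma gelfand_setting_forms {R : realType} {H : lmodType R} {ip a : H -> H -> R} {Y : set H} :
  gelfand_setting ip Y a -> semi_inner_form ip setT /\ semi_inner_form a Y.
Proof.
case=> [[ip_sym [ip_lin [ip_ge0 _]]] _ Y_subspace a_sym a_lin a_pos _ _ _].
split; first by split => //; split.
split => // y Yy; have [->|y_neq0] := eqVneq y 0; last exact/ltW/a_pos/eqP.
have Y0 := subspace0 Y_subspace.
by have := a_lin 1 0 0 0 Y0 Y0 Y0; rewrite scale1r addr0 mul1r; lra.
Qed.

Lemma sqr_le_linear_bound {R : realType} (x B k : R) : 0 <= x -> 0 <= B -> 0 <= k ->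
  x ^+ 2 <= 2 * B * x + k * B ^+ 2 -> x <= (k + 2) * B.
Proof.
move=> x_ge0 B_ge0 k_ge0 x_sqr; rewrite leNgt; apply/negP => x_gt.
have kB_ge0 : 0 <= k * B by rewrite mulr_ge0.
have x_gt0 : 0 < x by apply: le_lt_trans x_gt; rewrite mulr_ge0 ?addr_ge0.
have : x * (k * B) < x * (x - 2 * B) by rewrite ltr_pM2l //; lra.
have : 2 * B * (k * B) <= x * (k * B) by rewrite ler_wpM2r //; lra.
nra.
Qed.

Section GalerkinError.
Context {R : realType} {H : lmodType R} {ip a : H -> H -> R} {Y V : set H}.
Hypotheses (ip_form : semi_inner_form ip setT) (a_form : semi_inner_form a Y).
Hypotheses (V_subspace : is_subspace V) (V_sub : V `<=` Y).
Context {t : R} {ybar yrh : H}.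
Hypothesis galerkin : galerkin_solution ip a V (t ^+ 2) ybar yrh.

Let Y_subspace : is_subspace Y. Proof. by case: a_form. Qed.
Let V_yrh : V yrh. Proof. by case: galerkin. Qed.

Lemma galerkin_min {v} : V v ->
  ip (yrh - ybar) (yrh - ybar) + t ^+ 2 * a yrh yrh <=
  ip (v - ybar) (v - ybar) + t ^+ 2 * a v v.
Proof.
move=> Vv; pose d := v - yrh.
have Vd : V d := subspaceB V_subspace Vv V_yrh.
have Yd : Y d by apply: V_sub.
have Yyrh : Y yrh by apply: V_sub.
have orth : ip (yrh - ybar) d + t ^+ 2 * a yrh d = 0.
  by rewrite (formBl ip_form) //; case: galerkin => _ /(_ _ Vd); lra.
have -> : v - ybar = (yrh - ybar) + d by rewrite [RHS]addrC addrA subrK.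
have -> : v = yrh + d by rewrite [RHS]addrC subrK.
rewrite (form_sqrD ip_form (x := yrh - ybar) (y := d)) // (form_sqrD a_form) //.
have := form_ge0 ip_form (I : setT d).
have := mulr_ge0 (sqr_ge0 t) (form_ge0 a_form Yd); lra.
Qed.

Lemma galerkin_error_le {v} : 0 <= t -> V v ->
  form_norm ip (yrh - ybar) <= form_norm ip (v - ybar) + t * form_norm a v.
Proof.
move=> t_ge0 Vv; have Yv : Y v by apply: V_sub.
have Yyrh : Y yrh by apply: V_sub.
rewrite -(@ler_pXn2r _ 2%N) ?nnegrE ?addr_ge0 ?mulr_ge0 ?form_norm_ge0 //.
rewrite sqrrD exprMn !(form_norm_sqr ip_form) // (form_norm_sqr a_form) //.
have := galerkin_min Vv; have := mulr_ge0 (sqr_ge0 t) (form_ge0 a_form Yyrh).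
have := mulr_ge0 t_ge0 (mulr_ge0 (form_norm_ge0 ip (v - ybar)) (form_norm_ge0 a v)).
lra.
Qed.

Lemma galerkin_error_sqr_regular {w v} : Y ybar -> D_in_H ip Y a ybar w -> V v ->
  form_norm ip (yrh - ybar) ^+ 2 <=
  2 * (t ^+ 2 * form_norm ip w) * form_norm ip (yrh - ybar) +
  (form_norm ip (v - ybar) ^+ 2 + 2 * (t ^+ 2 * form_norm ip w) * form_norm ip (v - ybar)
   + t ^+ 2 * form_norm a (v - ybar) ^+ 2).
Proof.
move=> Yybar Dw Vv; have Yv : Y v by apply: V_sub.
have Yyrh : Y yrh by apply: V_sub.
have Ye : Y (yrh - ybar) := subspaceB Y_subspace Yyrh Yybar.
have Yd : Y (v - ybar) := subspaceB Y_subspace Yv Yybar.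
pose e := yrh - ybar; pose d := v - ybar.
have := galerkin_min Vv; rewrite -/e -/d.
rewrite -[yrh](subrK ybar) -[v](subrK ybar) -/e -/d [e + _]addrC [d + _]addrC.
rewrite (form_sqrD a_form (x := ybar) (y := e)) // (form_sqrD a_form (x := ybar) (y := d)) //.
rewrite (Dw e Ye) (Dw d Yd).
rewrite !(form_norm_sqr ip_form) // (form_norm_sqr a_form) //.
have [_ CSd] := ler_normlP _ _ (form_CauchySchwarz_norm ip_form (x := w) (y := d) I I).
have [CSe _] := ler_normlP _ _ (form_CauchySchwarz_norm ip_form (x := w) (y := e) I I).
have := sqr_ge0 t; have := form_ge0 a_form Ye.
nra.
Qed.

Context {P : H -> H} {c1 c2 c3 c4 : R}.
Hypothesis P_V : forall y, Y y -> V (P y).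
Hypothesis P_approx : forall y, Y y ->
  form_norm ip (y - P y) <= c1 * t * form_norm a y /\
  form_norm a (y - P y) <= c2 * form_norm a y.
Hypothesis P_approx_regular : forall y w, Y y -> D_in_H ip Y a y w ->
  form_norm ip (y - P y) <= c3 * t ^+ 2 * form_norm ip w /\
  form_norm a (y - P y) <= c4 * t * form_norm ip w.

Lemma galerkin_error_le_K_functional : 0 < t -> 0 <= c1 -> 0 <= c2 ->
  form_norm ip (yrh - ybar) <= (c1 + 1 + c2) * K_functional ip Y a t ybar.
Proof.
move=> t_gt0 c1_ge0 c2_ge0; have C_gt0 : 0 < c1 + 1 + c2 by lra.
rewrite mulrC -ler_pdivrMr //.
apply: (le_K_functional (subspace0 Y_subspace)) => y0 y1 Yy1 y_split.
have [Py1_ip Py1_a] := P_approx _ Yy1; have VPy1 := P_V _ Yy1.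
have YPy1 : Y (P y1) by apply: V_sub.
have N_ip : form_norm ip (P y1 - ybar) <= c1 * t * form_norm a y1 + form_norm ip y0.
  rewrite y_split opprD [- y0 + _]addrC addrA.
  apply: (le_trans (form_normB ip_form I I)).
  by rewrite (form_normBC ip_form (x := P y1)) // lerD2r.
have N_a : form_norm a (P y1) <= (1 + c2) * form_norm a y1.
  rewrite -[P y1](subKr y1) mulrDl mul1r.
  by apply: (le_trans (form_normB a_form Yy1 (subspaceB Y_subspace Yy1 YPy1))); rewrite lerD2l.
have := galerkin_error_le (ltW t_gt0) VPy1.
rewrite ler_pdivrMr //.
have := mulr_ge0 (addr_ge0 c1_ge0 c2_ge0) (form_norm_ge0 ip y0).
have := ler_wpM2l (ltW t_gt0) N_a; lra.
Qed.

Lemma galerkin_error_le_interp_norm s : 0 < t -> 0 <= c1 -> 0 <= c2 -> 0 <= s <= 1 ->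
  interp_mem ip Y a s ybar ->
  form_norm ip (yrh - ybar) <= 2 * (c1 + 1 + c2) * (t `^ s * interp_norm ip Y a s ybar).
Proof.
move=> t_gt0 c1_ge0 c2_ge0 s01 mem.
apply: (le_trans (galerkin_error_le_K_functional t_gt0 c1_ge0 c2_ge0)).
rewrite [2 * _]mulrC -mulrA; apply: ler_wpM2l; first lra.
by rewrite mulrA; apply: K_functional_le_interp_norm; first exact: subspace0.
Qed.

Lemma galerkin_error_regular w : 0 <= t -> 0 <= c3 -> Y ybar -> D_in_H ip Y a ybar w ->
  form_norm ip (yrh - ybar) <= (c3 ^+ 2 + c4 ^+ 2 + 2 * c3 + 2) * (t ^+ 2 * form_norm ip w).
Proof.
move=> t_ge0 c3_ge0 Yybar Dw; pose B := t ^+ 2 * form_norm ip w.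
have B_ge0 : 0 <= B by rewrite mulr_ge0 ?sqr_ge0 ?form_norm_ge0.
apply: sqr_le_linear_bound => //.
- exact: form_norm_ge0.
- by rewrite !addr_ge0 ?sqr_ge0 ?mulr_ge0.
have VPy := P_V _ Yybar; have YPy : Y (P ybar) by apply: V_sub.
apply: (le_trans (galerkin_error_sqr_regular Yybar Dw VPy)); rewrite lerD2l.
have [d_ip d_a] := P_approx_regular _ _ Yybar Dw.
rewrite (form_normBC ip_form (x := P ybar)) // (form_normBC a_form YPy Yybar).
set nd := form_norm ip (ybar - P ybar) in d_ip *.
set nda := form_norm a (ybar - P ybar) in d_a *.
have nd_ge0 : 0 <= nd := form_norm_ge0 _ _; have nda_ge0 : 0 <= nda := form_norm_ge0 _ _.
have nd_le : nd <= c3 * B by rewrite /B mulrA.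
have nda_sqr : t ^+ 2 * nda ^+ 2 <= c4 ^+ 2 * B ^+ 2.
  have -> : c4 ^+ 2 * B ^+ 2 = t ^+ 2 * (c4 * t * form_norm ip w) ^+ 2 by rewrite /B; ring.
  by rewrite ler_wpM2l ?sqr_ge0 // ler_pXn2r // nnegrE (le_trans nda_ge0).
have nd_sqr : nd ^+ 2 <= (c3 * B) ^+ 2 by rewrite ler_pXn2r // nnegrE (le_trans nd_ge0).
rewrite -/B; have := ler_wpM2l B_ge0 nd_le; lra.
Qed.

End GalerkinError.

Theorem mainTheorem4 (R : realType) (H : lmodType R) (ip a : H -> H -> R)
  (Y : set H) (Yh : R -> set H) (Ph : R -> H -> H)
  (h0 alpha c1 c2 c3 c4 : R) :
  gelfand_setting ip Y a ->
  0 < h0 -> 0 < alpha -> 0 < c1 -> 0 < c2 -> 0 < c3 -> 0 < c4 ->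
  (forall h, 0 < h <= h0 -> fin_dim_subspace Y (Yh h)) ->
  (forall h y, 0 < h <= h0 -> Y y -> Yh h (Ph h y)) ->
  (forall h y, 0 < h <= h0 -> Y y ->
     form_norm ip (y - Ph h y) <= c1 * h `^ alpha * form_norm a y /\
     form_norm a (y - Ph h y) <= c2 * form_norm a y) ->
  (forall h y w, 0 < h <= h0 -> Y y -> D_in_H ip Y a y w ->
     form_norm ip (y - Ph h y) <= c3 * h `^ (2 * alpha) * form_norm ip w /\
     form_norm a (y - Ph h y) <= c4 * h `^ alpha * form_norm ip w) ->
  exists c, 0 < c /\
    forall h, 0 < h <= h0 -> forall ybar yrh : H,
      galerkin_solution ip a (Yh h) (h `^ (2 * alpha)) ybar yrh ->
      [/\ form_norm ip (yrh - ybar) <= c * form_norm ip ybar,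
          Y ybar -> form_norm ip (yrh - ybar) <= c * h `^ alpha * form_norm a ybar,
          forall w, Y ybar -> D_in_H ip Y a ybar w ->
            form_norm ip (yrh - ybar) <= c * h `^ (2 * alpha) * form_norm ip w
        & forall s, 0 <= s <= 1 -> interp_mem ip Y a s ybar ->
            form_norm ip (yrh - ybar) <= c * h `^ (alpha * s) * interp_norm ip Y a s ybar].
Proof.
move=> G _ _ c1_gt0 c2_gt0 c3_gt0 _ Yh_fin Ph_V Ph_approx Ph_approx_regular.
have [ip_form a_form] := gelfand_setting_forms G.
have Y_subspace : is_subspace Y by case: a_form.
pose C := c1 + 1 + c2; pose k := c3 ^+ 2 + c4 ^+ 2 + 2 * c3.
have k_ge0 : 0 <= k by rewrite !addr_ge0 ?sqr_ge0 ?mulr_ge0 ?ltW.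
exists (2 * C + k + 2); split=> [|h hh ybar yrh]; first by rewrite /C; lra.
set t := h `^ alpha; have t_gt0 : 0 < t by rewrite powR_gt0 //; case/andP: hh.
have rhoE : h `^ (2 * alpha) = t ^+ 2 by rewrite mulrC powRrM powR_mulrn ?powR_ge0.
rewrite rhoE => galerkin; have Vh_subspace := fin_dim_subspace_subspace (Yh_fin h hh).
have Vh_sub := fin_dim_subspace_sub Y_subspace (Yh_fin h hh).
have raise_const C' x r : C' <= 2 * C + k + 2 -> 0 <= x -> r <= C' * x ->
    r <= (2 * C + k + 2) * x.
  by move=> C'_le x_ge0 /le_trans; apply; rewrite ler_wpM2r.
have err_interp s : 0 <= s <= 1 -> interp_mem ip Y a s ybar ->
    form_norm ip (yrh - ybar) <=
    (2 * C + k + 2) * h `^ (alpha * s) * interp_norm ip Y a s ybar.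
  move=> s01 mem; rewrite powRrM -/t -mulrA.
  apply: (raise_const (2 * C)); rewrite ?mulr_ge0 ?powR_ge0 ?interp_norm_ge0 //; first lra.
  exact: (galerkin_error_le_interp_norm ip_form a_form Vh_subspace Vh_sub galerkin
    (Ph_V h ^~ hh) (Ph_approx h ^~ hh) _ t_gt0 (ltW c1_gt0) (ltW c2_gt0)).
split.
- have := err_interp 0; rewrite mulr0 powRr0 mulr1 /interp_norm /interp_mem eqxx.
  by apply; rewrite ?lexx ?ler01.
- move=> Yybar; have := err_interp 1; rewrite mulr1 /interp_norm /interp_mem oner_eq0 eqxx.
  by apply; rewrite ?lexx ?ler01.
- move=> w Yybar Dw; rewrite -mulrA; apply: (raise_const (k + 2)).
  + by rewrite /C; lra.
  + by rewrite mulr_ge0 ?sqr_ge0 ?form_norm_ge0.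
  apply: (galerkin_error_regular ip_form a_form Vh_subspace Vh_sub galerkin
    (Ph_V h ^~ hh)) => //; try exact: ltW.
  by move=> y v Yy Dv; rewrite -rhoE; apply: Ph_approx_regular.
- exact: err_interp.
Qed.
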